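(* With the matrices defined in the context, $U\,V_\beta=K_\beta\,U$; i.e. the diagram $C_0\xrightarrow{U}H_0$, $V_\beta:C_0\to C_0$, $K_\beta:H_0\to H_0$, $C_0\xrightarrow{U}H_0$ commutes.
   Context: Setting. $I\subset\mathbb{R}$ compact interval; $f_i(x)=\rho_ix+\varrho_i$ ($i=1,\dots,n$), $0<|\rho_i|<1$, IFS with open set condition; $I$ is the union of a nonempty open interval $I_h$ (hole) and $f_1(I),\dots,f_n(I)$, with pairwise disjoint interiors and $I_h$ disjoint from the $f_i(I)$; $F(x)=f_i^{-1}(x)$ on $f_i(I)$. The laps $I_1,\dots,I_n$ (left to right) and the hole have endpoints $a_1<\dots<a_{n+2}$, hole $(a_h,a_{h+1})$; interior endpoints are turning/discontinuity points. Assume the forward orbit of every one-sided endpoint $a_i^\pm$ is finite. Points $y^{(1)},\dots,y^{(q)}$: the one-sided endpoints $a_1^+,a_2^-,a_2^+,\dots,a_{n+2}^-$ (with $a_i^-,a_i^+$ consecutive) together with all other points of their forward orbits, ordered along $I$; $C_0=\mathbb{R}^q$ with $y^{(i)}$ the $i$-th standard basis vector; $H_0=\mathbb{R}^n$ with basis indexed by the laps. $V_\beta=[v_{ij}]$ ($q\times q$, $\beta\in\mathbb{R}$): if $F(y^{(j)})=y^{(i)}$, $v_{ij}=\varepsilon(y^{(j)})|F'(y^{(j)})|^{-\beta}$ with $\varepsilon$ the sign of $F'$ at $y^{(j)}$ (column zero for limits from inside the hole); for every pair of consecutive entries that are the two one-sided versions of a turning/discontinuity point between $y^{(j)}$ and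 $y^{(i)}$: if $y^{(i)}>y^{(j)}$, pair $y^{(k)},y^{(k+1)}$, $j\le k<i$, set $v_{kj}=v_{ij}$, $v_{k+1,j}=-v_{ij}$; if $y^{(i)}<y^{(j)}$, pair $y^{(k-1)},y^{(k)}$, $i<k\le j$, set $v_{k-1,j}=-v_{ij}$, $v_{kj}=v_{ij}$; all other entries $0$. $U$ is the $n\times q$ matrix with entry $(j,i)$ equal to $1$ if $y^{(i)}\in I_j$, else $0$. $K_\beta$ is the $n\times n$ diagonal matrix with $k_{ii}=\varepsilon(I_i)|F'|_{I_i}|^{-\beta}$, $\varepsilon(I_i)$ the sign of $F'$ on $I_i$. *)

From HB Require Import structures.
From mathcomp Require Import all_boot all_order all_algebra.
From mathcomp Require Import all_classical all_reals all_analysis.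
Set Implicit Arguments. Unset Strict Implicit. Unset Printing Implicit Defensive.
Import Order.TTheory GRing.Theory Num.Theory.
Local Open Scope ring_scope.

(* Conventions (0-based):
   endpoints a 0 < a 1 < ... < a n.+1, I = [a 0, a n.+1];
   hole = (a h, a h.+1) with h <= n;
   laps I_0,...,I_{n-1} (left to right) are the remaining intervals
   [a (lapl j), a (lapl j).+1];
   the IFS maps are f_i(x) = rho i * x + varrho i, and f_(tau j)(I) = I_j,
   so F = f_(tau j)^{-1} on I_j.
   A one-sided point is a pair (x, s) : R * bool, s = true meaning x^+
   (limit from the right) and s = false meaning x^- (limit from the left). *)

Section Defs.
Variable R : realType.
Variables (n h : nat) (a : nat -> R) (rho varrho : 'I_n -> R) (tau : 'I_n -> 'I_n).

Definition lapl (j : 'I_n) : nat := if (j < h)%N then (j : nat) else (j : nat).+1.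

Definition inlap (j : 'I_n) (p : R * bool) : bool :=
  if p.2 then (a (lapl j) <= p.1) && (p.1 < a (lapl j).+1)
  else (a (lapl j) < p.1) && (p.1 <= a (lapl j).+1).

Definition Fder (j : 'I_n) : R := (rho (tau j))^-1.

(* F acting on one-sided points; None for limits from inside the hole *)
Definition Fos (p : R * bool) : option (R * bool) :=
  match [pick j | inlap j p] with
  | Some j => Some ((p.1 - varrho (tau j)) / rho (tau j),
                    if 0 < rho (tau j) then p.2 else ~~ p.2)
  | None => None
  end.

Fixpoint Fiter (m : nat) (p : R * bool) : option (R * bool) :=
  match m with 0 => Some p | m'.+1 => obind Fos (Fiter m' p) end.

Definition is_endpoint (e : R * bool) : Prop :=
  e = (a 0%N, true) \/ e = (a n.+1, false) \/
  exists k, (1 <= k <= n)%N /\ (e = (a k, false) \/ e = (a k, true)).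

Definition inY (p : R * bool) : Prop :=
  exists e m, is_endpoint e /\ Fiter m e = Some p.

Definition oslt (p p' : R * bool) : bool :=
  (p.1 < p'.1) || ((p.1 == p'.1) && ~~ p.2 && p'.2).

(* turning / discontinuity points: the interior endpoints a 1, ..., a n *)
Definition is_tp (x : R) : bool := [exists m : 'I_n, x == a m.+1].

Definition weight (beta : R) (j : 'I_n) : R :=
  Num.sg (Fder j) * powR `|Fder j| (- beta).

Variables (q : nat) (y : 'I_q -> R * bool) (beta : R).

Definition target (j : 'I_q) : option ('I_q * R) :=
  match [pick l | inlap l (y j)], Fos (y j) with
  | Some l, Some p =>
      match [pick i | y i == p] with
      | Some i => Some (i, weight beta l)
      | None => None
      end
  | _, _ => None
  end.

Definition cpair (k l : 'I_q) : bool :=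
  (nat_of_ord l == k.+1) && ((y k).1 == (y l).1) && is_tp (y k).1
  && ~~ (y k).2 && (y l).2.

Definition ventry (k j : 'I_q) : R :=
  match target j with
  | None => 0
  | Some (i, w) =>
    if k == i then w else
    if oslt (y j) (y i) then
      (if [exists l, cpair k l] && (j <= k < i)%N then w
       else if [exists l, cpair l k && (j <= l < i)%N] then - w else 0)
    else if oslt (y i) (y j) then
      (if [exists l, cpair l k] && (i < k <= j)%N then w
       else if [exists l, cpair k l && (i < l <= j)%N] then - w else 0)
    else 0
  end.

Definition Vmat : 'M[R]_q := \matrix_(k, j) ventry k j.

Definition Umat : 'M[R]_(n, q) := \matrix_(j, i) (if inlap j (y i) then 1 else 0).

Definition Kmat : 'M[R]_n := \matrix_(i, j) (if i == j then weight beta i else 0).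

End Defs.

From HB Require Import structures.
From mathcomp Require Import all_boot all_order all_algebra.
From mathcomp Require Import all_classical all_reals all_analysis.
From mathcomp Require Import zify lra.
Import Order.TTheory GRing.Theory Num.Theory.
Local Open Scope ring_scope.
Set Implicit Arguments. Unset Strict Implicit.

(* Every branch [f_i] maps [I] onto a whole lap, so [F] sends each one-sided
   endpoint of a lap to [a_1^+] or [a_(n+2)^-].  Hence the forward orbits add
   no new points: the [y^(i)] are exactly the [2n+2] one-sided endpoints, and
   column [c] of [V] is the weight of the lap of [y^(c)] times a sign pattern
   made of [e_1] or [e_(2n+2)] plus the differences [e_k - e_(k+1)] of the
   turning-point pairs in between.  As [U] adds up the two endpoints of each
   lap, this pattern telescopes to the indicator of the lap of [y^(c)]. *)

Lemma sorted_enum_unique (T : eqType) (lt : rel T) (q m : nat)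
    (y : 'I_q -> T) (g : nat -> T) :
  transitive lt -> irreflexive lt ->
  (forall i j : 'I_q, (i < j)%N -> lt (y i) (y j)) ->
  (forall i j, (i < j < m)%N -> lt (g i) (g j)) ->
  (forall p, (exists i, y i = p) <-> exists2 k, (k < m)%N & p = g k) ->
  q = m /\ forall i : 'I_q, y i = g i.
Proof.
move=> lt_trans lt_irr y_incr g_incr y_range.
have y_sorted : sorted lt [seq y i | i <- enum 'I_q].
  rewrite sorted_map; apply: (@sub_sorted _ (relpre val ltn)) => //.
  by rewrite -(@sorted_map _ _ val ltn) val_enum_ord iota_ltn_sorted.
have g_sorted : sorted lt [seq g k | k <- iota 0 m].
  rewrite sorted_map; apply: (@sub_in_sorted _ [pred k | (k < m)%N]) (iota_ltn_sorted 0 m).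
    by move=> i j /= ltim ltjm ltij; apply: g_incr; rewrite ltij.
  by apply/allP => k; rewrite mem_iota.
have same_mem : [seq y i | i <- enum 'I_q] =i [seq g k | k <- iota 0 m].
  move=> p; apply/mapP/mapP => [[i _ ->]|[k]].
    by have [k ltkm ->] := (y_range (y i)).1 (ex_intro _ i erefl); exists k; rewrite ?mem_iota.
  rewrite mem_iota => /= ltkm ->; have [i <-] := (y_range (g k)).2 (ex_intro2 _ _ k ltkm erefl).
  by exists i; rewrite ?mem_enum.
have ys_eq := irr_sorted_eq lt_trans lt_irr y_sorted g_sorted same_mem.
have qm : q = m by have := congr1 size ys_eq; rewrite !size_map -enumT size_enum_ord size_iota.
split=> // i; have := congr1 (fun s => nth (y i) s i) ys_eq.
by rewrite /= (nth_map i) ?size_enum_ord // nth_ord_enum (nth_map 0%N) ?nth_iota ?size_iota -?qm.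
Qed.

Lemma affine_image_itv_ends (R : realDomainType) (r v u0 u1 v0 v1 : R) : u0 <= u1 ->
  [set r * x + v | x in [set x | u0 <= x <= u1]]%classic = [set x | v0 <= x <= v1]%classic ->
  if 0 < r then r * u0 + v = v0 /\ r * u1 + v = v1
  else r * u0 + v = v1 /\ r * u1 + v = v0.
Proof.
move=> u01 img_eq.
have img x : u0 <= x <= u1 -> v0 <= r * x + v <= v1.
  move=> ux; suff : [set x | v0 <= x <= v1]%classic (r * x + v) by [].
  by rewrite -img_eq; exists x.
have preimg z : v0 <= z <= v1 -> exists2 x, u0 <= x <= u1 & r * x + v = z.
  move=> vz; have : [set x | v0 <= x <= v1]%classic z by [].
  by rewrite -img_eq => -[x]; exists x.
have /andP[v0u0 u0v1] := img u0 ltac:(by rewrite lexx u01).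
have /andP[v0u1 u1v1] := img u1 ltac:(by rewrite lexx u01).
have [x0 /andP[ux0 x0u] rx0] := preimg v0 ltac:(by rewrite lexx; lra).
have [x1 /andP[ux1 x1u] rx1] := preimg v1 ltac:(by rewrite lexx; lra).
case: ifPn => [r_gt0 | r_le0]; last rewrite -leNgt in r_le0.
- have := ler_wpM2l (ltW r_gt0) ux0; have := ler_wpM2l (ltW r_gt0) x1u; lra.
- have := ler_wnM2l r_le0 ux1; have := ler_wnM2l r_le0 x0u; lra.
Qed.

Lemma sum_half_eq (R : pzSemiRingType) m (F : 'I_m -> R) L (k0 k1 : 'I_m) :
  k0 = L.*2 :> nat -> k1 = L.*2.+1 :> nat ->
  \sum_(k < m) (if k./2 == L then 1 else 0) * F k = F k0 + F k1.
Proof.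
move=> k0E k1E; have k10 : k1 != k0 by rewrite -val_eqE /= k0E k1E gtn_eqF.
rewrite (bigD1 k0) ?k0E ?doubleK //= (bigD1 k1) ?k1E /= ?uphalf_double ?eqxx //.
rewrite big1 ?mul1r ?addr0 // => k /andP[/negPf k_ne1 /negPf k_ne0].
case: eqP => [half_k|]; last by rewrite mul0r.
have k_eq := odd_double_half k; move: k_ne0 k_ne1; rewrite -!val_eqE /= k0E k1E -k_eq half_k.
by case: (odd k); rewrite ?add0n ?add1n eqxx.
Qed.

Lemma oslt_irr (R : realType) : irreflexive (@oslt R).
Proof. by move=> [x [|]]; rewrite /oslt ltxx /= ?andbF. Qed.

Lemma oslt_trans (R : realType) : transitive (@oslt R).
Proof.
move=> [y t] [x s] [z u]; rewrite /oslt /=.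
case/orP=> [xy | /andP[/andP[/eqP-> ns] ->]] /orP[yz | /andP[/andP[/eqP<- nt] zu]] //=.
- by rewrite (lt_trans xy yz).
- by rewrite xy.
- by rewrite yz.
Qed.

Lemma double_or_doubleS k : (exists u, k = u.*2) \/ (exists u, k = u.*2.+1).
Proof.
by rewrite -[k]odd_double_half; case: (odd k); [right | left]; exists k./2.
Qed.

Section Endpoints.
Variables (R : realType) (n : nat) (a : nat -> R).
Hypothesis a_incr : forall k, (k <= n)%N -> a k < a k.+1.
Local Notation N := n.*2.+2.

Lemma a_homo : {in [pred k | (k <= n.+1)%N] &, {homo a : i j / (i < j)%N >-> i < j}}.
Proof.
apply: homo_ltn_in; first exact: lt_trans.
  by move=> i j _ jn k /andP[_ kj]; apply: leq_trans (ltnW kj) jn.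
by move=> i _ /=; apply: a_incr.
Qed.

Lemma a_leE i j : (i <= n.+1)%N -> (j <= n.+1)%N -> (a i <= a j) = (i <= j)%N.
Proof. by move=> ? ?; apply: (le_mono_in a_homo). Qed.

Lemma a_ltE i j : (i <= n.+1)%N -> (j <= n.+1)%N -> (a i < a j) = (i < j)%N.
Proof. by move=> ? ?; apply: (leW_mono_in (le_mono_in a_homo)). Qed.

Lemma a_eqE i j : (i <= n.+1)%N -> (j <= n.+1)%N -> (a i == a j) = (i == j).
Proof. by move=> ? ?; rewrite eq_le !a_leE // -eqn_leq. Qed.

(* [endpt] enumerates the one-sided endpoints in their order along [I]:
   [endpt u.*2 = a_u^+] and [endpt u.*2.+1 = a_(u+1)^-], for [k < N]. *)
Definition endpt (k : nat) : R * bool := (a (uphalf k), ~~ odd k).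

Lemma endpt_double u : endpt u.*2 = (a u, true).
Proof. by rewrite /endpt uphalf_double odd_double. Qed.

Lemma endpt_doubleS u : endpt u.*2.+1 = (a u.+1, false).
Proof. by rewrite /endpt /= doubleK odd_double. Qed.

Lemma is_endpointE e :
  is_endpoint n a e <-> exists2 k, (k < N)%N & e = endpt k.
Proof.
split.
  case=> [->|[->|[k [/andP[k_gt0 k_le] [->|->]]]]].
  - by exists 0%N.
  - by exists n.*2.+1; rewrite ?endpt_doubleS.
  - by exists k.-1.*2.+1; rewrite ?endpt_doubleS ?prednK //; lia.
  - by exists k.*2; rewrite ?endpt_double //; lia.
case=> k + ->; have [[u ->]|[u ->]] := double_or_doubleS k => ltkN.
  rewrite endpt_double; case: u ltkN => [|u] ltkN; first by left.
  by right; right; exists u.+1; split; [lia | right].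
rewrite endpt_doubleS; have [->|neq_un] := eqVneq u n; first by right; left.
by right; right; exists u.+1; split; [lia | left].
Qed.

Lemma uphalf_le k : (k < N)%N -> (uphalf k <= n.+1)%N.
Proof. by move=> ltkN; rewrite leq_uphalf_double doubleS ltnW. Qed.

Lemma oslt_endpt k k' : (k < N)%N -> (k' < N)%N ->
  oslt (endpt k) (endpt k') = (k < k')%N.
Proof.
move=> ltkN ltk'N; rewrite /oslt /= a_ltE ?a_eqE ?uphalf_le // negbK.
have [[u ->]|[u ->]] := double_or_doubleS k; have [[u' ->]|[u' ->]] := double_or_doubleS k';
  rewrite ?uphalf_double /= ?odd_double ?doubleK ?andbT ?andbF ?orbF /=; lia.
Qed.

Lemma endpt_inj k k' : (k < N)%N -> (k' < N)%N -> endpt k = endpt k' -> k = k'.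
Proof.
move=> ltkN ltk'N eq_kk'; have := oslt_endpt ltkN ltk'N; have := oslt_endpt ltk'N ltkN.
by rewrite eq_kk' oslt_irr; case: ltngtP.
Qed.

Section Laps.
Variable h : nat.

Lemma lapl_le (j : 'I_n) : (lapl h j <= n)%N.
Proof. by rewrite /lapl; case: ifP => _; [apply: ltnW |]. Qed.

Lemma lapl_inj : injective (lapl h : 'I_n -> nat).
Proof. by move=> j j'; rewrite /lapl => eq_l; apply: ord_inj; move: eq_l; do 2 case: ifP; lia. Qed.

Lemma inlap_endpt (j : 'I_n) k : (k < N)%N ->
  inlap h a j (endpt k) = (k./2 == lapl h j).
Proof.
move=> ltkN; have lj : ((lapl h j).+1 <= n.+1)%N by rewrite ltnS lapl_le.
have := uphalf_le ltkN; rewrite /inlap /=.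
have [[u ->]|[u ->]] := double_or_doubleS k;
  rewrite ?uphalf_double /= ?odd_double ?uphalf_double /= ?doubleK => un.
- by rewrite a_leE ?a_ltE ?(ltnW lj) // ltnS -eqn_leq eq_sym.
- by rewrite a_ltE ?a_leE ?(ltnW lj) // ltnS -eqn_leq eq_sym.
Qed.

End Laps.

Section FullBranches.
Variables (h : nat) (rho varrho : 'I_n -> R) (tau : 'I_n -> 'I_n).
Hypothesis rho_neq0 : forall i, rho i != 0.
Hypothesis lap_image : forall j : 'I_n,
  [set rho (tau j) * x + varrho (tau j) | x in [set x | a 0%N <= x <= a n.+1]]%classic
  = [set x | a (lapl h j) <= x <= a (lapl h j).+1]%classic.

Definition Fbranch (j : 'I_n) (p : R * bool) : R * bool :=
  ((p.1 - varrho (tau j)) / rho (tau j), if 0 < rho (tau j) then p.2 else ~~ p.2).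

Lemma FosE p : Fos h a rho varrho tau p = omap (Fbranch^~ p) [pick j | inlap h a j p].
Proof. by rewrite /Fos; case: pickP. Qed.

Lemma Fbranch_endpt (j : 'I_n) k : (k < N)%N -> inlap h a j (endpt k) ->
  Fbranch j (endpt k) \in [:: endpt 0; endpt n.*2.+1].
Proof.
move=> ltkN; rewrite inlap_endpt // => /eqP half_k.
have a0_le : a 0 <= a n.+1 by rewrite a_leE.
have := affine_image_itv_ends a0_le (lap_image j).
have inv x : (rho (tau j) * x + varrho (tau j) - varrho (tau j)) / rho (tau j) = x.
  by rewrite addrK mulrC mulKf.
rewrite /Fbranch endpt_doubleS !inE; move: half_k.
have [[u ->]|[u ->]] := double_or_doubleS k;
  rewrite ?endpt_double ?endpt_doubleS /= ?doubleK ?uphalf_double => <-;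
  by case: ifP => _ [e0 e1]; rewrite -?e0 -?e1 inv eqxx ?orbT.
Qed.

Lemma Fos_endpt k p : (k < N)%N -> Fos h a rho varrho tau (endpt k) = Some p ->
  p \in [:: endpt 0; endpt n.*2.+1].
Proof. by move=> ltkN; rewrite FosE; case: pickP => // j j_lap [<-]; apply: Fbranch_endpt. Qed.

Lemma inYE p : inY h a rho varrho tau p <-> exists2 k, (k < N)%N & p = endpt k.
Proof.
split; last first.
  by case=> k ltkN ->; exists (endpt k), 0%N; split => //; apply/is_endpointE; exists k.
case=> e [m [/is_endpointE e_end]]; elim: m p => [|m IHm] p /=; first by case=> <-.
case E: (Fiter _ _ _ _ _ m e) => [p0|] //= Fp0.
have [k ltkN p0E] := IHm p0 E; rewrite p0E in Fp0.
by move: (Fos_endpt ltkN Fp0); rewrite !inE => /orP[] /eqP ->; [exists 0%N | exists n.*2.+1].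
Qed.

Lemma sorted_orbit_points_endpt q (y : 'I_q -> R * bool) :
  (forall i j : 'I_q, (i < j)%N -> oslt (y i) (y j)) ->
  (forall p, (exists i, y i = p) <-> inY h a rho varrho tau p) ->
  q = N /\ forall i : 'I_q, y i = endpt i.
Proof.
move=> y_incr y_range; apply: sorted_enum_unique (@oslt_trans R) (@oslt_irr R) y_incr _ _.
  by move=> i j /andP[ij jN]; rewrite oslt_endpt // (ltn_trans ij jN).
by move=> p; rewrite y_range inYE.
Qed.

Variable beta : R.

Definition endpts (i : 'I_N) : R * bool := endpt i.

Lemma cpair_endpts (k l : 'I_N) : cpair n a endpts k l = (l == k.+1 :> nat) && odd k.
Proof.
rewrite /cpair /endpts; have [l_succ|] := eqVneq (l : nat) k.+1; last by [].
have := ltn_ord l; rewrite l_succ.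
have [[u ->]|[u ->]] := double_or_doubleS k => lt_uN.
  by rewrite endpt_double odd_double /= !andbF.
rewrite -doubleS endpt_double endpt_doubleS /= odd_double eqxx !andbT.
have lt_un : (u < n)%N by rewrite -ltn_double -ltnS -ltnS.
by apply/existsP; exists (Ordinal lt_un).
Qed.

Lemma existsb_cpair_r (k : 'I_N) (P : pred nat) :
  [exists l, cpair n a endpts k l && P l] = [&& odd k, (k.+1 < N)%N & P k.+1].
Proof.
apply/existsP/and3P => [[l /andP[]]|[odd_k lt_kN Pk]].
  by rewrite cpair_endpts => /andP[/eqP <- ->] Pl; split.
by exists (Ordinal lt_kN); rewrite cpair_endpts /= eqxx odd_k.
Qed.

Lemma existsb_cpair_l (k : 'I_N) (P : pred nat) :
  [exists l, cpair n a endpts l k && P l] = [&& ~~ odd k, (0 < k)%N & P k.-1].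
Proof.
apply/existsP/and3P => [[l /andP[]]|[even_k k_gt0 Pk]].
  by rewrite cpair_endpts => /andP[/eqP -> odd_l] Pl; split; rewrite /= ?negbK.
have lt_kN : (k.-1 < N)%N by rewrite (leq_ltn_trans (leq_pred k)).
exists (Ordinal lt_kN); rewrite cpair_endpts /= prednK // eqxx Pk andbT.
by move: even_k; rewrite -{1}(prednK k_gt0) /= negbK.
Qed.

Lemma existsb_cpair_rT (k : 'I_N) :
  [exists l, cpair n a endpts k l] = odd k && (k.+1 < N)%N.
Proof.
rewrite -[RHS]andbT -andbA -(existsb_cpair_r k xpredT).
by apply: eq_existsb => l; rewrite andbT.
Qed.

Lemma existsb_cpair_lT (k : 'I_N) :
  [exists l, cpair n a endpts l k] = ~~ odd k && (0 < k)%N.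
Proof.
rewrite -[RHS]andbT -andbA -(existsb_cpair_l k xpredT).
by apply: eq_existsb => l; rewrite andbT.
Qed.

Lemma pick_inlap (c : 'I_N) (l : 'I_n) : inlap h a l (endpt c) ->
  [pick l' | inlap h a l' (endpt c)] = Some l.
Proof.
move=> c_in_l; case: pickP => [l' c_in_l'|]; last by move/(_ l); rewrite c_in_l.
by congr Some; apply: (@lapl_inj h); move: c_in_l c_in_l'; rewrite !inlap_endpt // => /eqP <- /eqP.
Qed.

Lemma pick_endpts (i0 : 'I_N) : [pick i | endpts i == endpts i0] = Some i0.
Proof.
case: pickP => [i /eqP|]; last by move/(_ i0); rewrite eqxx.
by move/endpt_inj => eq_i; congr Some; apply: ord_inj; apply: eq_i.
Qed.

Lemma target_hole (c : 'I_N) : (forall l : 'I_n, ~~ inlap h a l (endpt c)) ->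
  target h a rho varrho tau endpts beta c = None.
Proof. by move=> c_in_hole; rewrite /target; case: pickP => // l; rewrite (negbTE (c_in_hole l)). Qed.

Lemma target_lap (c : 'I_N) (l : 'I_n) : inlap h a l (endpt c) ->
  target h a rho varrho tau endpts beta c = Some (ord0, weight rho tau beta l) \/
  target h a rho varrho tau endpts beta c = Some (ord_max, weight rho tau beta l).
Proof.
move=> c_in_l; rewrite /target /endpts FosE (pick_inlap c_in_l) /=.
have := Fbranch_endpt (ltn_ord c) c_in_l; rewrite !inE => /orP[] /eqP ->.
- by left; rewrite (pick_endpts ord0).
- by right; rewrite (pick_endpts ord_max).
Qed.

(* Column [c] of [V], divided by the weight, when [F] maps [y^(c)] to [a_1^+]
   (resp. to [a_(n+2)^-]). *)
Definition col_to_first (c k : nat) : R :=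
  if k == 0%N then 1 else if odd k then (if (k < c)%N then -1 else 0)
  else if (k <= c)%N then 1 else 0.

Definition col_to_last (c k : nat) : R :=
  if k == N.-1 then 1 else if odd k then (if (c <= k)%N then 1 else 0)
  else if (c < k)%N then -1 else 0.

Lemma ventry_to_last (k c : 'I_N) w :
  target h a rho varrho tau endpts beta c = Some (ord_max, w) ->
  ventry h a rho varrho tau endpts beta k c = w * col_to_last c k.
Proof.
move=> target_c; rewrite /ventry target_c /endpts !oslt_endpt //.
rewrite existsb_cpair_rT existsb_cpair_lT (existsb_cpair_l k (fun l => c <= l < N.-1)%N).
rewrite (existsb_cpair_r k (fun l => N.-1 < l <= c)%N) /col_to_last -val_eqE /=.
have := ltn_ord c; have := ltn_ord k.
by repeat case: ifP; rewrite ?mulr1 ?mulr0 ?mulrN1 //; lia.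
Qed.

Lemma ventry_to_first (k c : 'I_N) w :
  target h a rho varrho tau endpts beta c = Some (ord0, w) ->
  ventry h a rho varrho tau endpts beta k c = w * col_to_first c k.
Proof.
move=> target_c; rewrite /ventry target_c /endpts !oslt_endpt //.
rewrite existsb_cpair_rT existsb_cpair_lT (existsb_cpair_l k (fun l => c <= l < 0)%N).
rewrite (existsb_cpair_r k (fun l => 0 < l <= c)%N) /col_to_first -val_eqE /=.
have := ltn_ord c; have := ltn_ord k.
by repeat case: ifP; rewrite ?mulr1 ?mulr0 ?mulrN1 //; lia.
Qed.

Lemma col_to_first_pair c L :
  col_to_first c L.*2 + col_to_first c L.*2.+1 = if c./2 == L then 1 else 0.
Proof.
rewrite /col_to_first /= odd_double.
have [[u ->]|[u ->]] := double_or_doubleS c; rewrite ?doubleK /= ?uphalf_double;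
  by repeat case: ifP; rewrite ?addr0 ?add0r ?addrN ?addNr //; lia.
Qed.

Lemma col_to_last_pair c L : (c < N)%N ->
  col_to_last c L.*2 + col_to_last c L.*2.+1 = if c./2 == L then 1 else 0.
Proof.
rewrite /col_to_last /= odd_double.
have [[u ->]|[u ->]] := double_or_doubleS c; rewrite ?doubleK /= ?uphalf_double;
  by repeat case: ifP; rewrite ?addr0 ?add0r ?addrN ?addNr //; lia.
Qed.

Lemma mulUV_entry (j : 'I_n) (c : 'I_N) :
  (Umat n h a endpts *m Vmat h a rho varrho tau endpts beta) j c
  = weight rho tau beta j * (if inlap h a j (endpt c) then 1 else 0).
Proof.
have lt1 : ((lapl h j).*2.+1 < N)%N by rewrite !ltnS leq_double lapl_le.
have lt0 : ((lapl h j).*2 < N)%N by apply: ltn_trans lt1.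
rewrite !mxE; under eq_bigr => k _ do rewrite !mxE /endpts inlap_endpt //.
rewrite (@sum_half_eq _ _ _ _ (Ordinal lt0) (Ordinal lt1)) //.
case: (pickP (fun l : 'I_n => inlap h a l (endpt c))) => [l c_in_l | c_in_hole]; last first.
  have hole (l : 'I_n) : ~~ inlap h a l (endpt c) by rewrite (c_in_hole l).
  by rewrite /ventry target_hole // (negbTE (hole j)) addr0 mulr0.
have pair_sum : ventry h a rho varrho tau endpts beta (Ordinal lt0) c
    + ventry h a rho varrho tau endpts beta (Ordinal lt1) c
    = weight rho tau beta l * (if c./2 == lapl h j then 1 else 0).
  have [t|t] := target_lap c_in_l.
    by rewrite !(ventry_to_first _ t) -mulrDr col_to_first_pair.
  by rewrite !(ventry_to_last _ t) -mulrDr col_to_last_pair.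
rewrite pair_sum inlap_endpt //; case: eqP => [c_in_j|_]; last by rewrite !mulr0.
suff -> : l = j by [].
by apply: (@lapl_inj h); move: c_in_l; rewrite inlap_endpt // c_in_j => /eqP.
Qed.

End FullBranches.
End Endpoints.

Lemma Kmat_diag (R : realType) n (rho : 'I_n -> R) tau beta :
  Kmat rho tau beta = diag_mx (\row_i weight rho tau beta i).
Proof. by apply/matrixP => i j; rewrite !mxE eq_sym; case: eqP. Qed.

Theorem lemma3 (R : realType) (n h : nat) (a : nat -> R)
  (rho varrho : 'I_n -> R) (tau : 'I_n -> 'I_n) (beta : R)
  (q : nat) (y : 'I_q -> R * bool) :
  (forall k, (k <= n)%N -> a k < a k.+1) ->
  (h <= n)%N ->
  (forall i, 0 < `|rho i| < 1) ->
  bijective tau ->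
  (forall j : 'I_n,
     [set rho (tau j) * x + varrho (tau j) | x in [set x | a 0%N <= x <= a n.+1]]%classic
     = [set x | a (lapl h j) <= x <= a (lapl h j).+1]%classic) ->
  (forall i j : 'I_q, (i < j)%N -> oslt (y i) (y j)) ->
  (forall p, (exists i, y i = p) <-> inY h a rho varrho tau p) ->
  Umat n h a y *m Vmat h a rho varrho tau y beta
  = Kmat rho tau beta *m Umat n h a y.
Proof.
move=> a_incr _ rho_bounds _ lap_image y_incr y_range.
have rho_neq0 i : rho i != 0 by have /andP[+ _] := rho_bounds i; rewrite normr_gt0.
have [qN y_endpt] := sorted_orbit_points_endpt a_incr rho_neq0 lap_image y_incr y_range.
subst q; have -> : y = @endpts _ n a by apply/funext.
apply/matrixP => j c; rewrite (mulUV_entry a_incr rho_neq0 lap_image).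
by rewrite Kmat_diag mul_diag_mx !mxE.
Qed.
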